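(* Let $D=pq$ with $p\neq q$ odd primes, let $r$ be a positive integer with $2rD$ square-free, and let $d$ be a (possibly negative) integer with $d\mid rD$. Let $C_d$ be the curve $W^2=d+\frac{8rD}{d}Z^4$. Then: (1) $C_d(\mathbb{Q}_2)\neq\emptyset$ if and only if $d\equiv1\pmod 8$; (2) for any prime $t\mid \frac{rD}{d}$, $C_d(\mathbb{Q}_t)\neq\emptyset$ if and only if $\left(\frac{d}{t}\right)=1$; (3) for any prime $l\mid d$, $C_d(\mathbb{Q}_l)\neq\emptyset$ if and only if $\left(\frac{2rD/d}{l}\right)=1$.
   Context: $\left(\frac{\cdot}{\cdot}\right)$ denotes the Legendre symbol; $C_d(\mathbb{Q}_v)$ denotes the set of $\mathbb{Q}_v$-points $(Z,W)$ of the affine curve. *)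

From HB Require Import structures.
From mathcomp Require Import all_boot all_order all_algebra.
Set Implicit Arguments. Unset Strict Implicit. Unset Printing Implicit Defensive.
Import Order.TTheory GRing.Theory Num.Theory.
Local Open Scope ring_scope.

Definition squarefree (n : nat) : Prop :=
  forall t : nat, prime t -> (logn t n <= 1)%N.

Definition legendre (a : int) (l : nat) : int :=
  if (l%:Z %| a)%Z then 0
  else if [exists x : 'I_l, ((x%:Z) ^+ 2 == a %[mod l%:Z])%Z] then 1 else -1.

(* p-adic integers as compatible sequences of integer residues:
   x represents the element lim x n, with x n.+1 = x n mod p^n. *)
Definition padic_int (p : nat) (x : nat -> int) : Prop :=
  forall n : nat, (x n.+1 = x n %[mod (p%:Z) ^+ n])%Z.

Definition padic_eq (p : nat) (x y : nat -> int) : Prop :=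
  forall n : nat, (x n = y n %[mod (p%:Z) ^+ n])%Z.

(* C(Q_p) != empty for the affine curve  W^2 = d + c Z^4  (d, c integers).
   Every element of Q_p is z / p^a with z in Z_p; writing Z = z/p^a,
   W = w/p^b and clearing the (nonzero) denominator p^(4a+2b), the equation
   becomes  w^2 p^(4a) = d p^(4a+2b) + c z^4 p^(2b)  in Z_p. *)
Definition has_Qp_point (p : nat) (d c : int) : Prop :=
  exists (a b : nat) (z w : nat -> int),
    padic_int p z /\ padic_int p w /\
    padic_eq p (fun n => w n ^+ 2 * (p%:Z) ^+ (4 * a))
               (fun n => d * (p%:Z) ^+ (4 * a + 2 * b)
                         + c * z n ^+ 4 * (p%:Z) ^+ (2 * b)).

(* the coefficient 8rD/d of the curve C_d (an integer since d | rD) *)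
Definition Cd_coef (r D : nat) (d : int) : int := ((8 * r * D)%:Z %/ d)%Z.

(* Clearing denominators, a [Q_v]-point of [W^2 = d + c Z^4] yields for every [N] a
   congruence [W^2 = v^(2b) (v^(4a) d + c Z^4) mod v^N].  When the valuations of [d]
   and [c] differ by an odd number below 4, the two terms never have the same
   valuation; the smaller one must be even, being the valuation of a square, and its
   unit part must be a square mod [v] (mod [8] if [v = 2]).  Conversely, Hensel's
   lemma lifts a square root of [d] mod [v] (mod [8]) to a point with [Z = 0], and a
   square root of [d + c] mod [v] to a point with [Z = 1].  For [C_d] we have
   [c = 8 g] where [g d = rD] is odd and square-free: at [2], [d] is a unit and [c]
   has valuation 3; at [t | g], [d] is a unit and [c] has valuation 1; at [l | d],
   [d] has valuation 1 and [c] is a unit. *)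

From HB Require Import structures.
From mathcomp Require Import all_boot all_order all_algebra.
From mathcomp Require Import zify ring.
Import Order.TTheory GRing.Theory Num.Theory.
Local Open Scope ring_scope.

Lemma padic_intP (P : nat) (w : nat -> int) :
  (forall n, (P%:Z ^+ n %| w n.+1 - w n)%Z) -> padic_int P w.
Proof. by move=> w_congr n; apply/eqP; rewrite eqz_mod_dvd. Qed.

Lemma has_Qp_point_congr (P : nat) (d c : int) : has_Qp_point P d c ->
  exists a b : nat, forall N : nat, exists W Z : int,
    (P%:Z ^+ N %| W ^+ 2 - P%:Z ^+ (2 * b) * ((P%:Z ^+ a) ^+ 4 * d + c * Z ^+ 4))%Z.
Proof.
case=> a [b [z [w [_ [_ wz]]]]]; exists a, b => N; exists (P%:Z ^+ (2 * a) * w N), (z N).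
have -> : (P%:Z ^+ (2 * a) * w N) ^+ 2 - P%:Z ^+ (2 * b) * ((P%:Z ^+ a) ^+ 4 * d + c * z N ^+ 4)
    = w N ^+ 2 * P%:Z ^+ (4 * a) - (d * P%:Z ^+ (4 * a + 2 * b) + c * z N ^+ 4 * P%:Z ^+ (2 * b)).
  have p2a k : P%:Z ^+ (k * a) = (P%:Z ^+ a) ^+ k by rewrite mulnC exprM.
  by rewrite exprD !p2a; ring.
by rewrite -eqz_mod_dvd; apply/eqP.
Qed.

Lemma has_Qp_point_of_padic_sqrt (P : nat) (d c z : int) (w : nat -> int) : padic_int P w ->
  (forall n, (P%:Z ^+ n %| w n ^+ 2 - (d + c * z ^+ 4))%Z) -> has_Qp_point P d c.
Proof.
move=> w_padic wz; exists 0%N, 0%N, (fun _ => z), w; split=> //; split=> // n.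
by apply/eqP; rewrite eqz_mod_dvd !muln0 !expr0 !mulr1.
Qed.

(* Newton's iteration with the derivative frozen at its value mod [t]. *)
Lemma padic_sqrt_odd (t : nat) (A s : int) : prime t ->
  ~~ (t%:Z %| 2 * s)%Z -> (t%:Z %| s ^+ 2 - A)%Z ->
  exists w, padic_int t w /\ forall n, (t%:Z ^+ n %| w n ^+ 2 - A)%Z.
Proof.
move=> t_prime ts tA.
have /coprimezP [[u v] /= uv] : coprimez (2 * s) t%:Z.
  by rewrite coprimezE absz_nat coprime_sym prime_coprime.
pose w n := iter n (fun x => x - u * (x ^+ 2 - A)) s.
have w_inv n : (t%:Z %| w n - s)%Z /\ (t%:Z ^+ n.+1 %| w n ^+ 2 - A)%Z.
  elim: n => [|n [ws wA]]; first by rewrite subrr dvdz0 expr1.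
  have tD : (t%:Z %| w n ^+ 2 - A)%Z by apply: dvdz_trans wA; rewrite exprS dvdz_mulr.
  rewrite /= -/(w n); split.
    by rewrite addrAC rpredD // rpredN dvdz_mull.
  have -> : (w n - u * (w n ^+ 2 - A)) ^+ 2 - A = (w n ^+ 2 - A) *
      (t%:Z * v - 2 * u * (w n - s) + u ^+ 2 * (w n ^+ 2 - A) + (1 - (u * (2 * s) + v * t%:Z))).
    by ring.
  rewrite uv subrr addr0 (exprSr _ n.+1); apply: dvdz_mul wA _.
  by rewrite rpredD ?rpredB ?(dvdz_mull _ tD) ?(dvdz_mull _ ws) ?dvdz_mulr.
exists w; split=> [|n]; last by apply: dvdz_trans (proj2 (w_inv n)); apply: dvdz_exp2l.
apply: padic_intP => n; rewrite /= -/(w n) addrC addKr rpredN dvdz_mull //.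
by apply: dvdz_trans (proj2 (w_inv n)); apply: dvdz_exp2l.
Qed.

(* Newton's step [x - (x^2 - A) / (2 x)] with [1 / x] replaced by [1]; as [x] stays odd,
   each step still gains a 2-adic digit. *)
Lemma padic_sqrt_2 (A : int) : (8 %| A - 1)%Z ->
  exists w, padic_int 2 w /\ forall n, (2 ^+ n %| w n ^+ 2 - A)%Z.
Proof.
move=> A1.
have half n (q : int) : ((q * 2 ^+ n.+3) %/ 2)%Z = q * 2 ^+ n.+2.
  by rewrite exprS mulrCA mulrC mulzK.
pose w n := iter n (fun x => x - ((x ^+ 2 - A) %/ 2)%Z) 1.
have w_inv n : ~~ (2 %| w n)%Z /\ (2 ^+ n.+3 %| w n ^+ 2 - A)%Z.
  elim: n => [|n [w_odd /dvdzP [q wA]]].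
    by split=> //; rewrite -opprB rpredN.
  have [m w1] : exists m, 1 - w n = 2 * m.
    by exists ((1 - w n) %/ 2)%Z; move: w_odd; lia.
  rewrite /= -/(w n) wA half.
  split; first by rewrite rpredBr // !exprS mulrCA dvdz_mulr.
  have -> : (w n - q * 2 ^+ n.+2) ^+ 2 - A = 2 ^+ n.+4 * (q * m + q ^+ 2 * 2 ^+ n).
    have eA : A = w n ^+ 2 - q * 2 ^+ n.+3 by rewrite -wA; ring.
    have wm : w n = 1 - 2 * m by rewrite -w1; ring.
    by rewrite eA wm !exprS; ring.
  exact: dvdz_mulr.
exists w; split=> [|n]; last by apply: dvdz_trans (proj2 (w_inv n)); apply: dvdz_exp2l; lia.
apply: padic_intP => n; case: (w_inv n) => _ /dvdzP [q wA].
rewrite /= -/(w n) addrC addKr rpredN wA half.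
by apply: dvdz_mull; apply: dvdz_exp2l; lia.
Qed.

Section PrimePowers.

Context {P : nat} (P_prime : prime P).
Local Notation p := (P%:Z).

Lemma Euclid_dvdzM (x y : int) : (p %| x * y)%Z = (p %| x)%Z || (p %| y)%Z.
Proof. by rewrite !dvdzE abszM absz_nat Euclid_dvdM. Qed.

Lemma Euclid_dvdzX (x : int) (n : nat) : (p %| x ^+ n)%Z = (p %| x)%Z && (0 < n)%N.
Proof. by rewrite !dvdzE abszX absz_nat Euclid_dvdX. Qed.

Lemma odd_prime_ndvdz2 : odd P -> ~~ (p %| 2)%Z.
Proof.
move=> P_odd; rewrite dvdzE absz_nat; apply/negP => /(@dvdn_leq _ 2 isT) P_le2.
by move: (prime_gt1 P_prime) P_le2 P_odd; case: P => [|[|[]]].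
Qed.

Lemma odd_prime_ndvdz8 : odd P -> ~~ (p %| 8)%Z.
Proof.
by move=> P_odd; rewrite (_ : 8 = 2 ^+ 3)%Z // Euclid_dvdzX // (negPf (odd_prime_ndvdz2 P_odd)).
Qed.

Lemma pexp_neq0 (n : nat) : p ^+ n != 0.
Proof. by rewrite expf_neq0 // eqz_nat -lt0n prime_gt0. Qed.

Lemma dvdz_pexpS_mul (s : nat) (v : int) : (p ^+ s.+1 %| p ^+ s * v)%Z = (p %| v)%Z.
Proof. by rewrite exprSr dvdz_mul2l ?pexp_neq0. Qed.

Lemma pexp_dvdz_or_unit (x : int) (N : nat) : (p ^+ N %| x)%Z \/
  exists k u, [/\ (k < N)%N, x = p ^+ k * u & ~~ (p %| u)%Z].
Proof.
elim: N => [|N [/dvdzP [y ->] | [k [u [ltkN -> pu]]]]]; first by left; rewrite expr0 dvd1z.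
- have [py | npy] := boolP (p %| y)%Z; first by left; rewrite exprS; apply: dvdz_mul.
  by right; exists N, y; rewrite mulrC.
- by right; exists k, u; split => //; apply: ltnW.
Qed.

Lemma sqr_pexp_congr (N s : nat) (W v : int) : (s < N)%N -> ~~ (p %| v)%Z ->
  (p ^+ N %| W ^+ 2 - p ^+ s * v)%Z ->
  ~~ odd s /\ exists2 x, ~~ (p %| x)%Z & (p ^+ (N - s) %| x ^+ 2 - v)%Z.
Proof.
move=> ltsN pv WN.
have W_low j : (j <= N)%N -> (p ^+ j %| W ^+ 2 - p ^+ s * v)%Z.
  by move=> ?; apply: dvdz_trans WN; apply: dvdz_exp2l.
have W_high : ~~ (p ^+ s.+1 %| W ^+ 2)%Z.
  apply/negP => pW; move: (W_low _ ltsN).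
  by rewrite (rpredBl _ pW) dvdz_pexpS_mul (negPf pv).
case: (pexp_dvdz_or_unit W s.+1) => [pW | [k [u [_ Wu pu]]]].
  by case/negP: W_high; apply: dvdz_trans (dvdz_exp _ pW).
have {Wu}W2 : W ^+ 2 = p ^+ (2 * k) * u ^+ 2 by rewrite Wu exprMn -exprM mulnC.
rewrite W2 in W_high WN W_low.
case: (ltngtP (2 * k) s) => [lt2ks | lts2k | eq2ks].
- move: (W_low _ (ltnW (leq_ltn_trans lt2ks ltsN))).
  rewrite rpredBr ?dvdz_pexpS_mul ?Euclid_dvdzX ?(negPf pu) //.
  by apply: dvdz_mulr; apply: dvdz_exp2l.
- by case/negP: W_high; apply: dvdz_mulr; apply: dvdz_exp2l.
split; first by rewrite -eq2ks oddM.
exists u => //.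
have : (p ^+ s * p ^+ (N - s) %| p ^+ s * (u ^+ 2 - v))%Z.
  rewrite -exprD subnKC; last exact: ltnW.
  by rewrite mulrBr -{1}eq2ks.
by rewrite dvdz_mul2l ?pexp_neq0.
Qed.

Lemma has_Qp_point_const_sqr (e : nat) (d c : int) : odd e -> (e < 4)%N ->
  ~~ (p %| d)%Z -> ~~ (p %| c)%Z -> has_Qp_point P d (p ^+ e * c) ->
  exists2 x, ~~ (p %| x)%Z & (p ^+ e %| x ^+ 2 - d)%Z.
Proof.
move=> e_odd e_lt4 pd pc /has_Qp_point_congr [a [b Qp_congr]].
have [W [Z WZ]] := Qp_congr (2 * b + a * 4 + e)%N.
have e_gt0 : (0 < e)%N by case: (e) e_odd.
have pe : (p %| p ^+ e)%Z by rewrite dvdz_exp.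
(* As [e < 4], a [Z] of valuation [k < a] makes the [c]-term dominant, of odd valuation. *)
case: (pexp_dvdz_or_unit Z a) => [/dvdzP [z Zz] | [k [u [ltka Zu pu]]]].
- have [||| _ [x px]] := @sqr_pexp_congr (2 * b + a * 4 + e) (2 * b + a * 4) W
      (d + p ^+ e * (c * z ^+ 4)).
  + by rewrite -addn1 leq_add2l.
  + by rewrite rpredDr // dvdz_mulr.
  + suff -> : p ^+ (2 * b + a * 4) * (d + p ^+ e * (c * z ^+ 4)) =
        p ^+ (2 * b) * ((p ^+ a) ^+ 4 * d + p ^+ e * c * Z ^+ 4) by [].
    by rewrite Zz exprD (exprM p a 4); ring.
  rewrite addKn => xv; exists x => //.
  have -> : x ^+ 2 - d = x ^+ 2 - (d + p ^+ e * (c * z ^+ 4)) + p ^+ e * (c * z ^+ 4) by ring.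
  by rewrite rpredD // dvdz_mulr.
- have [j aj] : exists j, a = (k.+1 + j)%N by exists (a - k.+1)%N; rewrite subnKC.
  have [||| s_even _] := @sqr_pexp_congr (2 * b + a * 4 + e) (2 * b + k * 4 + e) W
      (c * u ^+ 4 + p ^+ (4 - e) * (p ^+ j) ^+ 4 * d).
  + by rewrite ltn_add2r ltn_add2l ltn_mul2r.
  + rewrite rpredDr; last by apply/dvdz_mulr/dvdz_mulr; rewrite dvdz_exp // subn_gt0.
    by rewrite Euclid_dvdzM Euclid_dvdzX (negPf pc) (negPf pu).
  + suff -> : p ^+ (2 * b + k * 4 + e) * (c * u ^+ 4 + p ^+ (4 - e) * (p ^+ j) ^+ 4 * d) =
        p ^+ (2 * b) * ((p ^+ a) ^+ 4 * d + p ^+ e * c * Z ^+ 4) by [].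
    have p4 : p ^+ 4 = p ^+ e * p ^+ (4 - e) by rewrite -exprD subnKC // ltnW.
    by rewrite Zu aj !exprD (exprM p k 4) (exprS p k) !exprMn p4; ring.
  by move: s_even e_odd; clear; lia.
Qed.

Lemma has_Qp_point_coef_sqr (d c : int) : ~~ (p %| d)%Z -> ~~ (p %| c)%Z ->
  has_Qp_point P (p * d) c -> exists2 u, ~~ (p %| u)%Z & exists x, (p %| x ^+ 2 - u ^+ 4 * c)%Z.
Proof.
move=> pd pc /has_Qp_point_congr [a [b Qp_congr]].
have [W [Z WZ]] := Qp_congr (2 * b + a * 4 + 2)%N.
(* A [Z] of valuation [> a] makes the [d]-term dominant, of odd valuation. *)
case: (pexp_dvdz_or_unit Z a.+1) => [/dvdzP [z Zz] | [k [u [ltka Zu pu]]]].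
- have [||| s_even _] := @sqr_pexp_congr (2 * b + a * 4 + 2) (2 * b + a * 4 + 1) W
      (d + p ^+ 3 * (c * z ^+ 4)).
  + by rewrite ltn_add2l.
  + by rewrite rpredDr // !exprS mulrA !dvdz_mulr.
  + suff -> : p ^+ (2 * b + a * 4 + 1) * (d + p ^+ 3 * (c * z ^+ 4)) =
        p ^+ (2 * b) * ((p ^+ a) ^+ 4 * (p * d) + c * Z ^+ 4) by [].
    by rewrite Zz !exprD (exprM p a 4) (exprS p a); ring.
  by move: s_even; clear; lia.
- have [j aj] : exists j, a = (k + j)%N by exists (a - k)%N; rewrite subnKC.
  have [||| _ [x _]] := @sqr_pexp_congr (2 * b + a * 4 + 2) (2 * b + k * 4) W
      (c * u ^+ 4 + p * (p ^+ j) ^+ 4 * d).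
  + by rewrite -addnA ltn_add2l; move: ltka; clear; lia.
  + rewrite rpredDr; last by apply/dvdz_mulr/dvdz_mulr.
    by rewrite Euclid_dvdzM Euclid_dvdzX (negPf pc) (negPf pu).
  + suff -> : p ^+ (2 * b + k * 4) * (c * u ^+ 4 + p * (p ^+ j) ^+ 4 * d) =
        p ^+ (2 * b) * ((p ^+ a) ^+ 4 * (p * d) + c * Z ^+ 4) by [].
    by rewrite Zu aj !exprD (exprM p k 4); ring.
  move=> xv; exists u => //; exists x.
  have -> : x ^+ 2 - u ^+ 4 * c = x ^+ 2 - (c * u ^+ 4 + p * (p ^+ j) ^+ 4 * d)
      + p * ((p ^+ j) ^+ 4 * d) by ring.
  rewrite rpredD ?dvdz_mulr //; apply: dvdz_trans xv.
  by rewrite dvdz_exp // subn_gt0; move: ltka; clear; lia.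
Qed.

End PrimePowers.

Lemma legendre_eq1P (a : int) (l : nat) : prime l ->
  legendre a l = 1 <-> ~~ (l%:Z %| a)%Z /\ exists x, (l%:Z %| x ^+ 2 - a)%Z.
Proof.
move=> l_prime; rewrite /legendre; case: ifP => [_ | la]; first by split=> // [[]].
have l_gt0 : (0 < l)%N by apply: prime_gt0.
case: ifP => [/existsP [x /eqP xa] | /negbT/existsP no_root]; split=> //.
  by move=> _; split=> //; exists x%:Z; rewrite -eqz_mod_dvd; apply/eqP.
case=> _ [x xa]; case: no_root.
have xl_lt : (`|(x %% l%:Z)%Z| < l)%N.
  by rewrite -ltz_nat gez0_abs ?modz_ge0 ?ltz_pmod // eqz_nat -lt0n.
exists (Ordinal xl_lt); rewrite /= gez0_abs ?modz_ge0 ?eqz_nat -?lt0n //.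
by rewrite modzXm eqz_mod_dvd.
Qed.

Lemma legendre_sqrM_eq1 (a y : int) (l : nat) : prime l -> ~~ (l%:Z %| y)%Z ->
  legendre (y ^+ 2 * a) l = 1 <-> legendre a l = 1.
Proof.
move=> l_prime ly; rewrite !legendre_eq1P // Euclid_dvdzM // Euclid_dvdzX // (negPf ly) /=.
split=> [] [la [x xa]]; split=> //; last by exists (y * x); rewrite exprMn -mulrBr dvdz_mull.
have /coprimezP [[s t] /= st] : coprimez y l%:Z.
  by rewrite coprimezE absz_nat coprime_sym prime_coprime.
exists (s * x).
have -> : (s * x) ^+ 2 - a = s ^+ 2 * (x ^+ 2 - y ^+ 2 * a)
    + a * ((s * y) ^+ 2 - (s * y + t * l%:Z) ^+ 2) by rewrite st; ring.
rewrite rpredD ?dvdz_mull //.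
have -> : (s * y) ^+ 2 - (s * y + t * l%:Z) ^+ 2 = - (t * (2 * s * y + t * l%:Z)) * l%:Z by ring.
by rewrite !dvdz_mull.
Qed.

Lemma dvdz8_sqr_odd (x : int) : ~~ (2 %| x)%Z -> (8 %| x ^+ 2 - 1)%Z.
Proof.
move=> x_odd; have [m ->] : exists m, x = 2 * m + 1.
  by exists ((x - 1) %/ 2)%Z; move: x_odd; lia.
have [s [-> | ->]] : exists s, m = 2 * s \/ m = 2 * s + 1 by exists (m %/ 2)%Z; lia.
  by apply/dvdzP; exists (s * (2 * s + 1)); ring.
by apply/dvdzP; exists ((2 * s + 1) * (s + 1)); ring.
Qed.

Lemma has_Qp_point_of_sqr_mod (t : nat) (d c z s : int) : prime t -> odd t ->
  ~~ (t%:Z %| s)%Z -> (t%:Z %| s ^+ 2 - (d + c * z ^+ 4))%Z -> has_Qp_point t d c.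
Proof.
move=> t_prime t_odd ts tsq.
have t2s : ~~ (t%:Z %| 2 * s)%Z.
  by rewrite Euclid_dvdzM // negb_or ts odd_prime_ndvdz2.
have [w [w_padic wsq]] := padic_sqrt_odd _ _ _ t_prime t2s tsq.
exact: has_Qp_point_of_padic_sqrt w_padic wsq.
Qed.

Lemma has_Qp_point_2 (d g : int) : ~~ (2 %| d)%Z -> ~~ (2 %| g)%Z ->
  has_Qp_point 2 d (8 * g) <-> (d = 1 %[mod 8])%Z.
Proof.
move=> d_odd g_odd; split=> [Qp | /eqP].
  have [x x_odd xd] := @has_Qp_point_const_sqr 2 isT 3 d g isT isT d_odd g_odd Qp.
  apply/eqP; rewrite eqz_mod_dvd.
  have -> : d - 1 = (x ^+ 2 - 1) - (x ^+ 2 - d) by ring.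
  by rewrite rpredB // dvdz8_sqr_odd.
rewrite eqz_mod_dvd => /padic_sqrt_2 [w [w_padic wd]].
by apply: (@has_Qp_point_of_padic_sqrt _ _ _ 0 _ w_padic) => n; rewrite expr0n mulr0 addr0.
Qed.

Lemma has_Qp_point_ramified_coef (t : nat) (d c : int) : prime t -> odd t ->
  ~~ (t%:Z %| d)%Z -> ~~ (t%:Z %| c)%Z ->
  has_Qp_point t d (t%:Z * c) <-> legendre d t = 1.
Proof.
move=> t_prime t_odd td tc; rewrite legendre_eq1P //; split=> [Qp | [_ [x xd]]].
  have [x _ xd] := @has_Qp_point_const_sqr t t_prime 1 d c isT isT td tc Qp.
  by split=> //; exists x.
apply: (@has_Qp_point_of_sqr_mod _ _ _ 0 x) => //.
  by apply: contra td => tx; rewrite -(rpredBl _ (@dvdz_exp 2%N _ _ isT tx)).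
by rewrite expr0n mulr0 addr0.
Qed.

Lemma has_Qp_point_ramified_const (l : nat) (d c : int) : prime l -> odd l ->
  ~~ (l%:Z %| d)%Z -> ~~ (l%:Z %| c)%Z ->
  has_Qp_point l (l%:Z * d) c <-> legendre c l = 1.
Proof.
move=> l_prime l_odd ld lc; split=> [Qp | ].
  have [u lu [x xc]] := has_Qp_point_coef_sqr l_prime _ _ ld lc Qp.
  rewrite -(@legendre_sqrM_eq1 _ (u ^+ 2)) ?Euclid_dvdzX ?(negPf lu) //.
  rewrite legendre_eq1P // -exprM Euclid_dvdzM // Euclid_dvdzX // (negPf lu) (negPf lc).
  by split=> //; exists x.
move/(legendre_eq1P _ _ l_prime) => -[_ [x xc]].
apply: (@has_Qp_point_of_sqr_mod _ _ _ 1 x) => //.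
  by apply: contra lc => lx; rewrite -(rpredBl _ (@dvdz_exp 2%N _ _ isT lx)).
have -> : x ^+ 2 - (l%:Z * d + c * 1 ^+ 4) = x ^+ 2 - c - d * l%:Z by ring.
by rewrite rpredB // dvdz_mull.
Qed.

Lemma squarefree_ndvdz_cofactor (n t : nat) (x y : int) : (0 < n)%N -> squarefree n ->
  prime t -> n%:Z = x * y -> (t%:Z %| x)%Z -> ~~ (t%:Z %| y)%Z.
Proof.
move=> n_gt0 n_sqf t_prime nxy tx; apply/negP => ty.
have := dvdz_mul tx ty; rewrite -nxy -PoszM dvdzE !absz_nat mulnn.
by rewrite (pfactor_dvdn 2 t_prime n_gt0) ltnNge n_sqf.
Qed.

Section SquarefreeFactorization.

Context {R : nat} {g d : int}.
Hypotheses (R_gt0 : (0 < R)%N) (sqf : squarefree (2 * R)) (Rgd : R%:Z = g * d).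

Lemma coprime_factors (t : nat) (x y : int) : prime t -> R%:Z = x * y ->
  (t%:Z %| x)%Z -> ~~ (t%:Z %| y)%Z.
Proof.
move=> t_prime Rxy tx; apply: (@squarefree_ndvdz_cofactor (2 * R) t (2 * x)) => //.
- by rewrite muln_gt0.
- by rewrite PoszM Rxy mulrA.
- exact: dvdz_mull.
Qed.

Lemma ndvdz2_R : ~~ (2 %| R%:Z)%Z.
Proof. by apply: (@squarefree_ndvdz_cofactor (2 * R) 2 2) => //; rewrite muln_gt0. Qed.

Lemma odd_prime_dvdz_R (t : nat) : prime t -> (t%:Z %| R%:Z)%Z -> odd t.
Proof. by case/even_prime=> [-> R2 | //]; case/negP: ndvdz2_R. Qed.

Lemma has_Qp_point_Cd_2 : has_Qp_point 2 d (8 * g) <-> (d = 1 %[mod 8])%Z.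
Proof.
apply: has_Qp_point_2; move: ndvdz2_R; apply: contra; rewrite Rgd.
  exact: dvdz_mull.
exact: dvdz_mulr.
Qed.

Lemma has_Qp_point_Cd_cofactor (t : nat) : prime t -> (t%:Z %| g)%Z ->
  has_Qp_point t d (8 * g) <-> legendre d t = 1.
Proof.
move=> t_prime tg; have [g' gt] := dvdzP tg.
have t_odd : odd t by apply: (@odd_prime_dvdz_R t t_prime); rewrite Rgd dvdz_mulr.
have Rt : R%:Z = t%:Z * (g' * d) by rewrite Rgd gt; ring.
have -> : 8 * g = t%:Z * (8 * g') by rewrite gt; ring.
apply: has_Qp_point_ramified_coef => //; first exact: coprime_factors Rgd tg.
rewrite Euclid_dvdzM // negb_or odd_prime_ndvdz8 //=.
by apply: contra (@coprime_factors t _ _ t_prime Rt (dvdzz _)); apply: dvdz_mulr.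
Qed.

Lemma has_Qp_point_Cd_divisor (l : nat) : prime l -> (l%:Z %| d)%Z ->
  has_Qp_point l d (8 * g) <-> legendre (2 * g) l = 1.
Proof.
move=> l_prime ld; have [d' dl] := dvdzP ld.
have l_odd : odd l by apply: (@odd_prime_dvdz_R l l_prime); rewrite Rgd dvdz_mull.
have Rl : R%:Z = l%:Z * (g * d') by rewrite Rgd dl; ring.
rewrite dl (mulrC d') has_Qp_point_ramified_const //.
- rewrite (_ : 8 * g = 2 ^+ 2 * (2 * g)); last by ring.
  exact/legendre_sqrM_eq1/odd_prime_ndvdz2.
- by apply: contra (@coprime_factors l _ _ l_prime Rl (dvdzz _)); apply: dvdz_mull.
rewrite Euclid_dvdzM // negb_or odd_prime_ndvdz8 //.
by apply: (@coprime_factors l d g l_prime); rewrite // Rgd mulrC.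
Qed.

End SquarefreeFactorization.

Theorem lemma2p1 (p q r : nat) (d : int) :
  prime p -> prime q -> odd p -> odd q -> p != q ->
  (0 < r)%N -> squarefree (2 * r * (p * q)) ->
  (d %| (r * (p * q))%:Z)%Z ->
  [/\ (has_Qp_point 2 d (Cd_coef r (p * q) d) <-> (d = 1 %[mod 8])%Z),
      (forall t : nat, prime t -> (t%:Z %| ((r * (p * q))%:Z %/ d))%Z ->
         (has_Qp_point t d (Cd_coef r (p * q) d) <-> legendre d t = 1))
    & (forall l : nat, prime l -> (l%:Z %| d)%Z ->
         (has_Qp_point l d (Cd_coef r (p * q) d) <->
          legendre (((2 * r * (p * q))%:Z %/ d)%Z) l = 1))].
Proof.
move=> p_prime q_prime _ _ _ r_gt0 sqf dR.
rewrite /Cd_coef -!mulnA in sqf *; set R := (r * (p * q))%N in sqf dR *.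
have R_gt0 : (0 < R)%N by rewrite !muln_gt0 r_gt0 !prime_gt0.
have [g Rgd] := dvdzP dR.
have d_neq0 : d != 0 by apply: contraTneq R_gt0 => d0; rewrite -ltz_nat Rgd d0 mulr0.
have divRd k : ((k * R)%:Z %/ d)%Z = k%:R * g by rewrite natz PoszM Rgd mulrA mulzK.
rewrite !divRd -[R in (R%:Z %/ d)%Z]mul1n divRd mul1r.
split.
- exact: has_Qp_point_Cd_2 R_gt0 sqf Rgd.
- exact: has_Qp_point_Cd_cofactor R_gt0 sqf Rgd.
- exact: has_Qp_point_Cd_divisor R_gt0 sqf Rgd.
Qed.
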